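(* Let $(N_n)_{n\in\mathbb{N}}$ be a strictly increasing sequence of natural numbers and let $f_n:\ell_1\to\mathbb{R}$ be defined as below. Then $f_n \geq 0$ for every $n \in \mathbb{N}$ and $f_n \wedge f_l = 0$ for all $n \neq l$.
   Context: Identify $c_0^*=\ell_1$ and write $x^*=(x^*_1,x^*_2,\ldots)$. For $n<m$ let $g_{nm}: \ell_1 \to [0,1]$ be any continuous function such that $g_{nm}(x^* ) = 0$ if $N_m|x_n^*| \leq |x_m^*|$, $g_{nm}(x^* ) = 1$ if $|x_m^*| \leq (N_m-1)|x_n^*|$, and $g_{nm}(x^* )=g_{nm}(x^*/\|x^*\|)$ whenever $x^* \neq 0$. Define $$f_n(x^* ) = \big(|x_n^*|-N_n\max\{|x_m^*| : m<n\}\big)^+ \cdot \prod_{m > n}g_{nm}(x^* ),$$ where $r^+=\max\{r,0\}$ and the max over the empty set is $0$. Order and lattice operations are pointwise. *)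

From HB Require Import structures.
From mathcomp Require Import all_boot all_order all_algebra.
From mathcomp Require Import all_classical all_reals all_analysis.
Set Implicit Arguments. Unset Strict Implicit. Unset Printing Implicit Defensive.
Import Order.TTheory GRing.Theory Num.Theory.
Import numFieldNormedType.Exports.
Local Open Scope ring_scope.

(* Elements of c_0^* = l_1 are modelled as real sequences x : nat -> R whose
   series of absolute values converges. *)
Definition in_l1 (R : realType) (x : nat -> R) : Prop :=
  cvgn (series (fun k => `|x k|)).

Definition l1norm (R : realType) (x : nat -> R) : R :=
  limn (series (fun k => `|x k|)).

Definition l1_continuous_at (R : realType) (g : (nat -> R) -> R) (x : nat -> R)
  : Prop :=
  forall e : R, 0 < e -> exists2 d : R, 0 < d &
    forall y, in_l1 y -> l1norm (fun k => y k - x k) < d -> `|g y - g x| < e.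

(* Hypotheses on g_{nm} (n < m). *)
Definition admissible_g (R : realType) (N : nat -> nat) (n m : nat)
  (g : (nat -> R) -> R) : Prop :=
  [/\ forall x, in_l1 x -> 0 <= g x <= 1,
      forall x, in_l1 x -> (x n != 0) || (x m != 0) -> l1_continuous_at g x,
      forall x, in_l1 x -> (x n != 0) || (x m != 0) ->
        (N m)%:R * `|x n| <= `|x m| -> g x = 0,
      forall x, in_l1 x -> (x n != 0) || (x m != 0) ->
        `|x m| <= ((N m)%:R - 1) * `|x n| -> g x = 1 &
      forall x, in_l1 x -> x != (fun _ => 0) ->
        g x = g (fun k => x k / l1norm x)].

Definition pos_part (R : realType) (r : R) : R := Num.max r 0.

Definition f_n (R : realType) (N : nat -> nat)
  (g : nat -> nat -> (nat -> R) -> R) (n : nat) (x : nat -> R) : R :=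
  pos_part (`|x n| - (N n)%:R * \big[Num.max/0]_(m < n) `|x m|) *
  limn (fun k => \prod_(n.+1 <= m < k) g n m x).

From HB Require Import structures.
From mathcomp Require Import all_boot all_order all_algebra.
From mathcomp Require Import all_classical all_reals all_analysis.
Import Order.TTheory GRing.Theory Num.Theory.
Import numFieldNormedType.Exports.
Local Open Scope ring_scope.

(* Both factors of f_n are nonnegative: the infinite product is a limit of
   nonincreasing partial products of factors in [0, 1].  For n < l, if the
   first factor of f_l is positive then |x_l| > N_l max_{m<l} |x_m| >= N_l |x_n|,
   which forces the factor g_{nl}(x) of f_n to vanish, and with it f_n(x). *)

Set Implicit Arguments.
Unset Strict Implicit.

Section PartialProducts.
Variables (R : realType) (u : nat -> R) (a : nat).

Section UnitIntervalFactors.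
Hypothesis u01 : forall m, (a <= m)%N -> 0 <= u m <= 1.

Lemma partial_prod_ge0 k : 0 <= \prod_(a <= m < k) u m.
Proof.
rewrite big_nat; apply: prodr_ge0 => m /andP[am _].
by case/andP: (u01 am).
Qed.

Lemma partial_prod_nonincreasing :
  nonincreasing_seq (fun k => \prod_(a <= m < k) u m).
Proof.
apply/nonincreasing_seqP => k; case: (leqP a k) => ak; last first.
  by rewrite !big_geq // ltnW.
have /andP[_ uk_le1] := u01 ak.
by rewrite big_nat_recr //= ler_piMr // partial_prod_ge0.
Qed.

Lemma lim_partial_prod_ge0 : 0 <= limn (fun k => \prod_(a <= m < k) u m).
Proof.
apply: limr_ge; last by near=> k; exact: partial_prod_ge0.
apply/cvg_ex; eexists; apply: nonincreasing_cvgn.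
  exact: partial_prod_nonincreasing.
by exists 0 => _ [k _ <-]; exact: partial_prod_ge0.
Unshelve. all: by end_near.
Qed.

End UnitIntervalFactors.

Lemma lim_partial_prod_eq0 l : (a <= l)%N -> u l = 0 ->
  limn (fun k => \prod_(a <= m < k) u m) = 0.
Proof.
move=> al ul0; apply: cvg_lim => //; apply: cvg_near_cst; near=> k.
have lk : (l < k)%N by near: k; exact: nbhs_infty_gt.
rewrite (big_cat_nat _ (n := l)) //= 1?ltnW //.
by rewrite (big_ltn (m := l)) // ul0 mul0r mulr0.
Unshelve. all: by end_near.
Qed.

End PartialProducts.

Lemma pos_part_ge0 (R : realType) (r : R) : 0 <= pos_part r.
Proof. by rewrite /pos_part le_max lexx orbT. Qed.

Lemma minr_eq0 (R : realType) (r s : R) : 0 <= r -> 0 <= s ->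
  r = 0 \/ s = 0 -> Num.min r s = 0.
Proof. by move=> r0 s0 [->|->]; [rewrite min_l | rewrite min_r]. Qed.

Section DisjointSupports.
Variables (R : realType) (N : nat -> nat) (g : nat -> nat -> (nat -> R) -> R).
Hypothesis g_admissible : forall n m, (n < m)%N -> admissible_g N n m (g n m).

Lemma admissible_g_ge0_le1 n m x : (n < m)%N -> in_l1 x -> 0 <= g n m x <= 1.
Proof. by move=> nm x_l1; case: (g_admissible nm) => g01 _ _ _ _; exact: g01. Qed.

Lemma admissible_g_eq0 n m x : (n < m)%N -> in_l1 x ->
  (N m)%:R * `|x n| < `|x m| -> g n m x = 0.
Proof.
move=> nm x_l1 x_dom; case: (g_admissible nm) => _ _ g0 _ _.
apply: g0 => //; last exact: ltW.
by apply/orP; right; rewrite -normr_gt0 (le_lt_trans _ x_dom) // mulr_ge0.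
Qed.

Lemma f_n_ge0 n x : in_l1 x -> 0 <= f_n N g n x.
Proof.
move=> x_l1; apply: mulr_ge0; first exact: pos_part_ge0.
by apply: lim_partial_prod_ge0 => m nm; exact: admissible_g_ge0_le1.
Qed.

Lemma f_n_disjoint n l x : (n < l)%N -> in_l1 x ->
  f_n N g n x = 0 \/ f_n N g l x = 0.
Proof.
move=> nl x_l1; set M := \big[Num.max/0]_(m < l) `|x m|.
have [lead_le0|lead_gt0] := leP (`|x l| - (N l)%:R * M) 0.
  by right; rewrite /f_n /pos_part max_r // mul0r.
left; have xn_le_M : `|x n| <= M by rewrite /M (bigD1 (Ordinal nl)) //= le_max lexx.
have gnl0 : g n l x = 0.
  apply: admissible_g_eq0 => //; rewrite subr_gt0 in lead_gt0.
  by apply: le_lt_trans lead_gt0; apply: ler_wpM2l.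
by rewrite /f_n (lim_partial_prod_eq0 nl gnl0) mulr0.
Qed.

End DisjointSupports.

Theorem mainTheorem7 (R : realType) (N : nat -> nat)
  (g : nat -> nat -> (nat -> R) -> R) :
  (forall n m : nat, (n < m)%N -> (N n < N m)%N) ->
  (forall n m : nat, (n < m)%N -> admissible_g N n m (g n m)) ->
  (forall n x, in_l1 x -> 0 <= f_n N g n x) /\
  (forall n l x, n != l -> in_l1 x -> Num.min (f_n N g n x) (f_n N g l x) = 0).
Proof.
move=> _ g_admissible; split=> [n x|n l x nl x_l1]; first exact: f_n_ge0.
apply: minr_eq0; [exact: f_n_ge0 x_l1 | exact: f_n_ge0 x_l1 |].
case: (ltngtP n l) nl => // [n_lt_l|l_lt_n] _.
  exact: f_n_disjoint.
by apply/or_comm; exact: f_n_disjoint.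
Qed.
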